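(* Let $G$ be a finite Dedekind group. Then $G$ is code-perfect if and only if every subgroup of $G$ is code-perfect.
   Context: A Dedekind group is a group all of whose subgroups are normal (every subgroup of a Dedekind group is again a Dedekind group). For a normal subgroup $H$ of a finite group $G$ with identity $e$, the subgroup sum graph $\Gamma_{G,H}$ is the simple undirected graph with vertex set $G$ in which distinct vertices $x,y$ are adjacent if and only if $xy\in H\setminus\{e\}$. A perfect code in a graph is a set $C$ of vertices that is independent and such that every vertex not in $C$ is adjacent to exactly one vertex of $C$. A finite group $G$ is code-perfect if $\Gamma_{G,H}$ admits a perfect code for every normal subgroup $H$ of $G$. *)

From mathcomp Require Import all_boot all_fingroup.
Set Implicit Arguments. Unset Strict Implicit. Unset Printing Implicit Defensive.
Local Open Scope group_scope.

Definition dedekind (gT : finGroupType) (G : {group gT}) : Prop :=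
  forall H : {group gT}, H \subset G -> H <| G.

Definition ssg_adj (gT : finGroupType) (H : {set gT}) (x y : gT) : bool :=
  (x != y) && (x * y \in H :\ 1).

Definition perfect_code (gT : finGroupType) (G H C : {set gT}) : Prop :=
  [/\ C \subset G,
      {in C &, forall x y, ~~ ssg_adj H x y}
    & {in G :\: C, forall x, #|[set y in C | ssg_adj H x y]| = 1%N}].

Definition code_perfect (gT : finGroupType) (G : {group gT}) : Prop :=
  forall H : {group gT}, H <| G -> exists C : {set gT}, perfect_code G H C.

(* In a Dedekind group every subgroup H of a subgroup K of G is normal in G,
   so Gamma_{G,H} has a perfect code C. Every neighbour of a vertex x of K
   lies in x^-1 H, which is inside K; hence C :&: K is a perfect code of
   Gamma_{K,H}. *)
From mathcomp Require Import all_boot all_fingroup.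

Set Implicit Arguments.
Unset Strict Implicit.
Unset Printing Implicit Defensive.

Local Open Scope group_scope.

Section SubgroupSumGraph.

Variables (gT : finGroupType) (K H : {group gT}).
Hypothesis sHK : H \subset K.

Lemma ssg_adj_mem x y : x \in K -> ssg_adj H x y -> y \in K.
Proof.
move=> xK /andP[_ /setD1P[_ xyH]].
by rewrite -(mulKg x y) groupM ?groupV // (subsetP sHK).
Qed.

Lemma perfect_code_setI (G C : {set gT}) :
  K \subset G -> perfect_code G H C -> perfect_code K H (C :&: K).
Proof.
move=> sKG [_ indC uniqC]; split; first exact: subsetIr.
  by move=> x y /setIP[xC _] /setIP[yC _]; apply: indC.
move=> x /setDP[xK]; rewrite inE xK andbT => xNC.
have xG : x \in G :\: C by rewrite inE xNC (subsetP sKG).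
rewrite -(uniqC x xG); apply: eq_card => y; rewrite !inE -andbA.
by apply/and3P/andP => [[]|[yC adj]]; last rewrite (ssg_adj_mem xK adj); split.
Qed.

End SubgroupSumGraph.

Theorem lemma4p4 (gT : finGroupType) (G : {group gT}) :
  dedekind G ->
  (code_perfect G <-> (forall K : {group gT}, K \subset G -> code_perfect K)).
Proof.
move=> dedG; split=> [cpG K sKG H nsHK | cp_sub]; last exact: cp_sub.
have sHK : H \subset K by case/andP: nsHK.
have [C codeC] := cpG H (dedG H (subset_trans sHK sKG)).
by exists (C :&: K); apply: (perfect_code_setI sHK sKG codeC).
Qed.
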